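(* For every command $c$ and store $\sigma$ of the While-language: $(c,\sigma)\Rightarrow^\infty$ if and only if $(c,\sigma)\Downarrow^{co}\mathsf{div}$.
   Context: While-language syntax: variables $x$ range over a countably infinite set $\mathit{Var}$; $n$ ranges over natural numbers; values are $v ::= \mathsf{null}\mid n$ ($\mathsf{null}$ distinct from every natural number); expressions are $e ::= v\mid x\mid e_1\oplus e_2$ with $\oplus\in\{+,-,*\}$, where $\oplus(n_1,n_2)$ is the result of the operation on naturals; commands are $c ::= \mathsf{skip}\mid\mathsf{alloc}\ x\mid x:=e\mid c_1;c_2\mid \mathsf{if}\ e\ c_1\ c_2\mid\mathsf{while}\ e\ c$. A store $\sigma$ is a finite partial map from $\mathit{Var}$ to values, with domain $\mathrm{dom}(\sigma)$, lookup $\sigma(x)$, update $\sigma[x\mapsto v]$. Expression evaluation $(e,\sigma)\Rightarrow_E v$ is the least relation with: $(v,\sigma)\Rightarrow_E v$; $(x,\sigma)\Rightarrow_E\sigma(x)$ if $x\in\mathrm{dom}(\sigma)$; if $(e_1,\sigma)\Rightarrow_E n_1$ and $(e_2,\sigma)\Rightarrow_E n_2$ with $n_1,n_2$ naturals then $(e_1\oplus e_2,\sigma)\Rightarrow_E\oplus(n_1,n_2)$. Big-step relation $(c,\sigma)\Rightarrow_B\sigma'$ is the least relation with: $(\mathsf{skip},\sigma)\Rightarrow_B\sigma$; $(\mathsf{alloc}\ x,\sigma)\Rightarrow_B\sigma[x\mapsto\mathsf{null}]$ if $x\notin\mathrm{dom}(\sigma)$; $(x:=e,\sigma)\Rightarrow_B\sigma[x\mapsto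 v]$ if $x\in\mathrm{dom}(\sigma)$ and $(e,\sigma)\Rightarrow_E v$; $(c_1;c_2,\sigma)\Rightarrow_B\sigma''$ if $(c_1,\sigma)\Rightarrow_B\sigma'$ and $(c_2,\sigma')\Rightarrow_B\sigma''$; $(\mathsf{if}\ e\ c_1\ c_2,\sigma)\Rightarrow_B\sigma'$ if $(e,\sigma)\Rightarrow_E v$, $v\ne0$, $(c_1,\sigma)\Rightarrow_B\sigma'$; $(\mathsf{if}\ e\ c_1\ c_2,\sigma)\Rightarrow_B\sigma'$ if $(e,\sigma)\Rightarrow_E0$, $(c_2,\sigma)\Rightarrow_B\sigma'$; $(\mathsf{while}\ e\ c,\sigma)\Rightarrow_B\sigma''$ if $(e,\sigma)\Rightarrow_E v$, $v\ne0$, $(c,\sigma)\Rightarrow_B\sigma'$, $(\mathsf{while}\ e\ c,\sigma')\Rightarrow_B\sigma''$; $(\mathsf{while}\ e\ c,\sigma)\Rightarrow_B\sigma$ if $(e,\sigma)\Rightarrow_E0$. The big-step divergence predicate $(c,\sigma)\Rightarrow^\infty$ is the greatest predicate such that every element is the conclusion of an instance of one of these rules whose $\Rightarrow^\infty$-premises are in it: $(c_1,\sigma)\Rightarrow^\infty$ gives $(c_1;c_2,\sigma)\Rightarrow^\infty$; $(c_1,\sigma)\Rightarrow_B\sigma'$ and $(c_2,\sigma')\Rightarrow^\infty$ give $(c_1;c_2,\sigma)\Rightarrow^\infty$; $(e,\sigma)\Rightarrow_E v$, $v\ne0$, $(c_1,\sigma)\Rightarrow^\infty$ give $(\mathsf{if}\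 e\ c_1\ c_2,\sigma)\Rightarrow^\infty$; $(e,\sigma)\Rightarrow_E0$, $(c_2,\sigma)\Rightarrow^\infty$ give $(\mathsf{if}\ e\ c_1\ c_2,\sigma)\Rightarrow^\infty$; $(e,\sigma)\Rightarrow_E v$, $v\ne0$, $(c,\sigma)\Rightarrow^\infty$ give $(\mathsf{while}\ e\ c,\sigma)\Rightarrow^\infty$; $(e,\sigma)\Rightarrow_E v$, $v\ne0$, $(c,\sigma)\Rightarrow_B\sigma'$, $(\mathsf{while}\ e\ c,\sigma')\Rightarrow^\infty$ give $(\mathsf{while}\ e\ c,\sigma)\Rightarrow^\infty$. Pretty-big-step semantics: outcomes $o ::= \mathsf{conv}\ \sigma\mid\mathsf{div}$; semantic commands $C ::= c\mid\mathsf{assign2}\ x\ v\mid\mathsf{seq2}\ o\ c\mid\mathsf{if2}\ v\ c\ c\mid\mathsf{while2}\ v\ e\ c\mid\mathsf{while3}\ o\ e\ c$. The rules for judgments $(C,\sigma)\Downarrow o$ are: $(\mathsf{skip},\sigma)\Downarrow\mathsf{conv}\ \sigma$; $(\mathsf{alloc}\ x,\sigma)\Downarrow\mathsf{conv}\ \sigma[x\mapsto\mathsf{null}]$ if $x\notin\mathrm{dom}(\sigma)$; $(x:=e,\sigma)\Downarrow o$ if $(e,\sigma)\Rightarrow_E v$ and $(\mathsf{assign2}\ x\ v,\sigma)\Downarrow o$; $(\mathsf{assign2}\ x\ v,\sigma)\Downarrow\mathsf{conv}\ \sigma[x\mapsto v]$ if $x\in\mathrm{dom}(\sigma)$; $(c_1;c_2,\sigma)\Downarrow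 o$ if $(c_1,\sigma)\Downarrow o_1$ and $(\mathsf{seq2}\ o_1\ c_2,\sigma)\Downarrow o$; $(\mathsf{seq2}\ (\mathsf{conv}\ \sigma)\ c,\sigma_0)\Downarrow o$ if $(c,\sigma)\Downarrow o$; $(\mathsf{if}\ e\ c_1\ c_2,\sigma)\Downarrow o$ if $(e,\sigma)\Rightarrow_E v$ and $(\mathsf{if2}\ v\ c_1\ c_2,\sigma)\Downarrow o$; $(\mathsf{if2}\ v\ c_1\ c_2,\sigma)\Downarrow o_1$ if $v\ne0$ and $(c_1,\sigma)\Downarrow o_1$; $(\mathsf{if2}\ 0\ c_1\ c_2,\sigma)\Downarrow o_2$ if $(c_2,\sigma)\Downarrow o_2$; $(\mathsf{while}\ e\ c,\sigma)\Downarrow o$ if $(e,\sigma)\Rightarrow_E v$ and $(\mathsf{while2}\ v\ e\ c,\sigma)\Downarrow o$; $(\mathsf{while2}\ v\ e\ c,\sigma)\Downarrow o'$ if $v\ne0$, $(c,\sigma)\Downarrow o$ and $(\mathsf{while3}\ o\ e\ c,\sigma)\Downarrow o'$; $(\mathsf{while2}\ 0\ e\ c,\sigma)\Downarrow\mathsf{conv}\ \sigma$; $(\mathsf{while3}\ (\mathsf{conv}\ \sigma)\ e\ c,\sigma_0)\Downarrow o$ if $(\mathsf{while}\ e\ c,\sigma)\Downarrow o$; $(\mathsf{seq2}\ \mathsf{div}\ c_2,\sigma)\Downarrow\mathsf{div}$; $(\mathsf{while3}\ \mathsf{div}\ e\ c,\sigma)\Downarrow\mathsf{div}$. $\Downarrow^{co}$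 denotes the coinductive interpretation of these same rules: the greatest relation such that every element is the conclusion of a rule instance whose $\Downarrow$-premises lie in it ($\Rightarrow_E$ premises keep their meaning). *)

From Stdlib Require Import Arith List.
Import ListNotations.

Definition var := nat.

Inductive val : Type := Vnull : val | Vnat : nat -> val.

Inductive binop : Type := Oplus | Ominus | Omult.

Definition eval_op (o : binop) (n1 n2 : nat) : nat :=
  match o with Oplus => n1 + n2 | Ominus => n1 - n2 | Omult => n1 * n2 end.

Inductive expr : Type :=
| Eval : val -> expr
| Evar : var -> expr
| Eop : binop -> expr -> expr -> expr.

Inductive cmd : Type :=
| Cskip : cmd
| Calloc : var -> cmd
| Cassign : var -> expr -> cmd
| Cseq : cmd -> cmd -> cmd
| Cif : expr -> cmd -> cmd -> cmd
| Cwhile : expr -> cmd -> cmd.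

Record store : Type := Store {
  smap : var -> option val;
  sfin : exists l : list var, forall x, smap x <> None -> In x l }.

Definition in_dom (s : store) (x : var) : Prop := smap s x <> None.

Definition upd_map (s : store) (x : var) (v : val) : var -> option val :=
  fun y => if Nat.eqb y x then Some v else smap s y.

Lemma upd_fin (s : store) (x : var) (v : val) :
  exists l : list var, forall y, upd_map s x v y <> None -> In y l.
Proof.
  destruct (sfin s) as [l Hl]. exists (x :: l). intros y Hy.
  unfold upd_map in Hy. simpl in Hy. destruct (Nat.eqb_spec y x) as [Heq|Hne].
  - left; symmetry; exact Heq.
  - right; apply Hl; exact Hy.
Qed.

Definition upd (s : store) (x : var) (v : val) : store :=
  Store (upd_map s x v) (upd_fin s x v).

Inductive eval_expr : expr -> store -> val -> Prop :=
| EE_val : forall v s, eval_expr (Eval v) s v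
| EE_var : forall x s v, smap s x = Some v -> eval_expr (Evar x) s v
| EE_op : forall o e1 e2 s n1 n2,
    eval_expr e1 s (Vnat n1) -> eval_expr e2 s (Vnat n2) ->
    eval_expr (Eop o e1 e2) s (Vnat (eval_op o n1 n2)).

Inductive bigstep : cmd -> store -> store -> Prop :=
| B_skip : forall s, bigstep Cskip s s
| B_alloc : forall x s, ~ in_dom s x -> bigstep (Calloc x) s (upd s x Vnull)
| B_assign : forall x e s v, in_dom s x -> eval_expr e s v ->
    bigstep (Cassign x e) s (upd s x v)
| B_seq : forall c1 c2 s s' s'', bigstep c1 s s' -> bigstep c2 s' s'' ->
    bigstep (Cseq c1 c2) s s''
| B_if_true : forall e c1 c2 s s' v, eval_expr e s v -> v <> Vnat 0 ->
    bigstep c1 s s' -> bigstep (Cif e c1 c2) s s'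
| B_if_false : forall e c1 c2 s s', eval_expr e s (Vnat 0) ->
    bigstep c2 s s' -> bigstep (Cif e c1 c2) s s'
| B_while_true : forall e c s s' s'' v, eval_expr e s v -> v <> Vnat 0 ->
    bigstep c s s' -> bigstep (Cwhile e c) s' s'' -> bigstep (Cwhile e c) s s''
| B_while_false : forall e c s, eval_expr e s (Vnat 0) -> bigstep (Cwhile e c) s s.

CoInductive bigdiv : cmd -> store -> Prop :=
| D_seq1 : forall c1 c2 s, bigdiv c1 s -> bigdiv (Cseq c1 c2) s
| D_seq2 : forall c1 c2 s s', bigstep c1 s s' -> bigdiv c2 s' -> bigdiv (Cseq c1 c2) s
| D_if_true : forall e c1 c2 s v, eval_expr e s v -> v <> Vnat 0 ->
    bigdiv c1 s -> bigdiv (Cif e c1 c2) s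
| D_if_false : forall e c1 c2 s, eval_expr e s (Vnat 0) ->
    bigdiv c2 s -> bigdiv (Cif e c1 c2) s
| D_while_body : forall e c s v, eval_expr e s v -> v <> Vnat 0 ->
    bigdiv c s -> bigdiv (Cwhile e c) s
| D_while_loop : forall e c s s' v, eval_expr e s v -> v <> Vnat 0 ->
    bigstep c s s' -> bigdiv (Cwhile e c) s' -> bigdiv (Cwhile e c) s.

Inductive outcome : Type := Oconv : store -> outcome | Odiv : outcome.

Inductive scmd : Type :=
| SC : cmd -> scmd
| Sassign2 : var -> val -> scmd
| Sseq2 : outcome -> cmd -> scmd
| Sif2 : val -> cmd -> cmd -> scmd
| Swhile2 : val -> expr -> cmd -> scmd
| Swhile3 : outcome -> expr -> cmd -> scmd.

CoInductive pbs_co : scmd -> store -> outcome -> Prop :=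
| P_skip : forall s, pbs_co (SC Cskip) s (Oconv s)
| P_alloc : forall x s, ~ in_dom s x -> pbs_co (SC (Calloc x)) s (Oconv (upd s x Vnull))
| P_assign : forall x e s v o, eval_expr e s v -> pbs_co (Sassign2 x v) s o ->
    pbs_co (SC (Cassign x e)) s o
| P_assign2 : forall x v s, in_dom s x -> pbs_co (Sassign2 x v) s (Oconv (upd s x v))
| P_seq : forall c1 c2 s o1 o, pbs_co (SC c1) s o1 -> pbs_co (Sseq2 o1 c2) s o ->
    pbs_co (SC (Cseq c1 c2)) s o
| P_seq2 : forall s c s0 o, pbs_co (SC c) s o -> pbs_co (Sseq2 (Oconv s) c) s0 o
| P_if : forall e c1 c2 s v o, eval_expr e s v -> pbs_co (Sif2 v c1 c2) s o ->
    pbs_co (SC (Cif e c1 c2)) s o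
| P_if2_true : forall v c1 c2 s o1, v <> Vnat 0 -> pbs_co (SC c1) s o1 ->
    pbs_co (Sif2 v c1 c2) s o1
| P_if2_false : forall c1 c2 s o2, pbs_co (SC c2) s o2 ->
    pbs_co (Sif2 (Vnat 0) c1 c2) s o2
| P_while : forall e c s v o, eval_expr e s v -> pbs_co (Swhile2 v e c) s o ->
    pbs_co (SC (Cwhile e c)) s o
| P_while2_true : forall v e c s o o', v <> Vnat 0 -> pbs_co (SC c) s o ->
    pbs_co (Swhile3 o e c) s o' -> pbs_co (Swhile2 v e c) s o'
| P_while2_false : forall e c s, pbs_co (Swhile2 (Vnat 0) e c) s (Oconv s)
| P_while3 : forall s e c s0 o, pbs_co (SC (Cwhile e c)) s o ->
    pbs_co (Swhile3 (Oconv s) e c) s0 o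
| P_seq2_div : forall c2 s, pbs_co (Sseq2 Odiv c2) s Odiv
| P_while3_div : forall e c s, pbs_co (Swhile3 Odiv e c) s Odiv.

From Stdlib Require Import Classical_Prop.

(* A converging big-step derivation is finite, so by induction on it every
   coinductive pretty-big-step derivation for the same configuration has the
   outcome [Oconv s'].  Conversely, given a pretty-big-step derivation of a
   configuration that does not converge, decide classically whether the first
   sub-computation (of a sequence, or of a loop body) converges: if it does,
   its outcome is forced and the non-termination must come from the rest; if
   not, it comes from that sub-computation.  Either way a [bigdiv] rule
   applies, and corecursion builds the divergence derivation. *)

Definition converges (c : cmd) (s : store) : Prop := exists s', bigstep c s s'.

Lemma eval_expr_det : forall e s v1 v2,
  eval_expr e s v1 -> eval_expr e s v2 -> v1 = v2.
Proof.
  intros e s v1 v2 H1; revert v2.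
  induction H1; intros v' H2; inversion H2; subst; try reflexivity.
  - congruence.
  - match goal with
    | Ha : eval_expr e1 _ _, Hb : eval_expr e2 _ _ |- _ =>
        apply IHeval_expr1 in Ha; apply IHeval_expr2 in Hb
    end.
    congruence.
Qed.

Ltac eval_expr_det_subst :=
  repeat match goal with
  | H1 : eval_expr ?e ?s ?v1, H2 : eval_expr ?e ?s ?v2 |- _ =>
      pose proof (eval_expr_det e s v1 v2 H1 H2); clear H2; try subst
  end.

Lemma bigstep_pbs_co : forall c s s',
  bigstep c s s' -> pbs_co (SC c) s (Oconv s').
Proof.
  induction 1.
  - apply P_skip.
  - apply P_alloc; assumption.
  - eapply P_assign; [eassumption |]. apply P_assign2; assumption.
  - eapply P_seq; [eassumption |]. apply P_seq2; assumption.
  - eapply P_if; [eassumption |]. apply P_if2_true; assumption.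
  - eapply P_if; [eassumption |]. apply P_if2_false; assumption.
  - eapply P_while; [eassumption |].
    eapply P_while2_true; [eassumption | eassumption |].
    apply P_while3; assumption.
  - eapply P_while; [eassumption |]. apply P_while2_false.
Qed.

Lemma pbs_co_seq2_conv : forall s1 c s0 o,
  pbs_co (Sseq2 (Oconv s1) c) s0 o -> pbs_co (SC c) s1 o.
Proof. intros s1 c s0 o H; inversion H; subst; assumption. Qed.

Lemma pbs_co_while3_conv : forall s1 e c s0 o,
  pbs_co (Swhile3 (Oconv s1) e c) s0 o -> pbs_co (SC (Cwhile e c)) s1 o.
Proof. intros s1 e c s0 o H; inversion H; subst; assumption. Qed.

Lemma bigstep_pbs_co_det : forall c s s' o,
  bigstep c s s' -> pbs_co (SC c) s o -> o = Oconv s'.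
Proof.
  intros c s s' o H; revert o.
  induction H; intros o Ho; inversion Ho; subst; eval_expr_det_subst;
    try congruence.
  - match goal with Hp : pbs_co (Sassign2 _ _) _ _ |- _ =>
      inversion Hp; subst; reflexivity end.
  - match goal with Hp : pbs_co (SC c1) _ _ |- _ =>
      apply IHbigstep1 in Hp; subst end.
    eauto using pbs_co_seq2_conv.
  - match goal with Hp : pbs_co (Sif2 _ _ _) _ _ |- _ =>
      inversion Hp; subst; auto; congruence end.
  - match goal with Hp : pbs_co (Sif2 _ _ _) _ _ |- _ =>
      inversion Hp; subst; auto; congruence end.
  - match goal with Hp : pbs_co (Swhile2 _ _ _) _ _ |- _ =>
      inversion Hp; subst; [| congruence] end.
    match goal with Hp : pbs_co (SC c) _ _ |- _ =>
      apply IHbigstep1 in Hp; subst end.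
    eauto using pbs_co_while3_conv.
  - match goal with Hp : pbs_co (Swhile2 _ _ _) _ _ |- _ =>
      inversion Hp; subst; [congruence | reflexivity] end.
Qed.

CoFixpoint bigdiv_pbs_co : forall c s, bigdiv c s -> pbs_co (SC c) s Odiv.
Proof.
  intros c s H; destruct H.
  - eapply P_seq; [apply bigdiv_pbs_co; eassumption |]. apply P_seq2_div.
  - eapply P_seq; [apply bigstep_pbs_co; eassumption |].
    apply P_seq2, bigdiv_pbs_co; assumption.
  - eapply P_if; [eassumption |].
    apply P_if2_true; [assumption |]. apply bigdiv_pbs_co; assumption.
  - eapply P_if; [eassumption |].
    apply P_if2_false, bigdiv_pbs_co; assumption.
  - eapply P_while; [eassumption |].
    eapply P_while2_true; [eassumption | apply bigdiv_pbs_co; eassumption |].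
    apply P_while3_div.
  - eapply P_while; [eassumption |].
    eapply P_while2_true; [eassumption | apply bigstep_pbs_co; eassumption |].
    apply P_while3, bigdiv_pbs_co; assumption.
Qed.

CoFixpoint pbs_co_bigdiv : forall c s o,
  pbs_co (SC c) s o -> ~ converges c s -> bigdiv c s.
Proof.
  intros c s o H Hnc; destruct c; inversion H; subst.
  - exfalso; apply Hnc; eexists; apply B_skip.
  - exfalso; apply Hnc; eexists; apply B_alloc; assumption.
  - match goal with Hp : pbs_co (Sassign2 _ _) _ _ |- _ =>
      inversion Hp; subst end.
    exfalso; apply Hnc; eexists; eapply B_assign; eassumption.
  - match goal with
    | Ha : pbs_co (SC c1) _ ?o1, Hb : pbs_co (Sseq2 ?o1 _) _ _ |- _ =>
        rename Ha into Hc1, Hb into Hc2, o1 into o1'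
    end.
    destruct (classic (converges c1 s)) as [[s1 Hs1] | Hnc1].
    + rewrite (bigstep_pbs_co_det _ _ _ _ Hs1 Hc1) in Hc2.
      apply D_seq2 with s1; [assumption |].
      apply (pbs_co_bigdiv c2 s1 o); [eapply pbs_co_seq2_conv; eassumption |].
      intros [s2 Hs2]; apply Hnc; eexists; eapply B_seq; eassumption.
    + apply D_seq1, (pbs_co_bigdiv c1 s o1'); assumption.
  - match goal with Hp : pbs_co (Sif2 _ _ _) _ _ |- _ =>
      inversion Hp; subst end.
    + eapply D_if_true; [eassumption | assumption |].
      apply (pbs_co_bigdiv c1 s o); [assumption |].
      intros [s2 Hs2]; apply Hnc; eexists; eapply B_if_true; eassumption.
    + apply D_if_false; [assumption |].
      apply (pbs_co_bigdiv c2 s o); [assumption |].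
      intros [s2 Hs2]; apply Hnc; eexists; eapply B_if_false; eassumption.
  - match goal with Hp : pbs_co (Swhile2 _ _ _) _ _ |- _ =>
      inversion Hp; subst end.
    + match goal with
      | Ha : pbs_co (SC c) _ ?ob, Hb : pbs_co (Swhile3 ?ob _ _) _ _ |- _ =>
          rename Ha into Hbody, Hb into Hrest, ob into obody
      end.
      destruct (classic (converges c s)) as [[s1 Hs1] | Hncb].
      * rewrite (bigstep_pbs_co_det _ _ _ _ Hs1 Hbody) in Hrest.
        eapply D_while_loop; [eassumption | eassumption | eassumption |].
        apply (pbs_co_bigdiv (Cwhile e c) s1 o);
          [eapply pbs_co_while3_conv; eassumption |].
        intros [s2 Hs2]; apply Hnc; eexists; eapply B_while_true; eassumption.
      * eapply D_while_body; [eassumption | eassumption |].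
        apply (pbs_co_bigdiv c s obody); assumption.
    + exfalso; apply Hnc; eexists; apply B_while_false; assumption.
Qed.

Theorem theorem13 : forall (c : cmd) (s : store),
  bigdiv c s <-> pbs_co (SC c) s Odiv.
Proof.
  intros c s; split.
  - apply bigdiv_pbs_co.
  - intros H; apply (pbs_co_bigdiv c s Odiv H).
    intros [s' Hs'].
    discriminate (bigstep_pbs_co_det c s s' Odiv Hs' H).
Qed.
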